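(* Let $c$ be the pullback closure operator on $\mathsf{Qnd}$ associated with the reflection $\pi_0\dashv U$. Then: (1) $c_X(\{x\})=[x]_X$ for every quandle $X$ and $x\in X$; (2) for any family $(S_i)_{i\in I}$ of subquandles of $X$, $c_X(\bigvee_{i\in I}S_i)=\bigvee_{i\in I}c_X(S_i)$, where $\bigvee$ denotes the smallest subquandle containing the given ones; (3) for quandles $X_1,\dots,X_n$ and subquandles $M_i\subseteq X_i$, $c_{X}(\prod_{i=1}^n M_i)=\prod_{i=1}^n c_{X_i}(M_i)$ where $X=\prod_{i=1}^n X_i$; (4) for any surjective homomorphism $f\colon X\to Y$ and subquandle $M\subseteq X$, $f(c_X(M))=c_Y(f(M))$.
   Context: A quandle is a set $X$ with two binary operations $\lhd,\lhd^{-1}$ satisfying, for all $x,y,z\in X$: $x\lhd x = x = x\lhd^{-1}x$; $(x\lhd y)\lhd^{-1}y = x = (x\lhd^{-1}y)\lhd y$; $(x\lhd y)\lhd z = (x\lhd z)\lhd(y\lhd z)$ and $(x\lhd^{-1}y)\lhd^{-1}z = (x\lhd^{-1}z)\lhd^{-1}(y\lhd^{-1}z)$. Homomorphisms preserve both operations; $\mathsf{Qnd}$ is the resulting category. A quandle is trivial if $x\lhd y = x = x\lhd^{-1}y$ for all $x,y$; these form the full subcategory $\mathsf{Qnd}^*$, with inclusion $U$. For $x\in X$, the orbit $[x]_X$ is the set of all elements $x\lhd^{\alpha_1}x_1\cdots\lhd^{\alpha_n}x_n$ ($n\ge 0$, $x_i\in X$, $\lhd^{\alpha_i}\in\{\lhd,\lhd^{-1}\}$,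 bracketed from the left). The functor $\pi_0\colon\mathsf{Qnd}\to\mathsf{Qnd}^*$ sends $X$ to the trivial quandle of its orbits and is left adjoint to $U$, with unit $\eta_X\colon X\to U\pi_0(X)$, $x\mapsto[x]_X$. The pullback closure operator $c$: for a subquandle $M\subseteq X$ with inclusion $m$, $c_X(M)$ is the inverse image under $\eta_X$ of the image of $U\pi_0(m)\colon U\pi_0(M)\to U\pi_0(X)$. *)

From Stdlib Require Import FunctionalExtensionality.
From mathcomp Require Import ssreflect ssrfun ssrbool eqtype ssrnat fintype.

Set Implicit Arguments.
Unset Strict Implicit.
Unset Printing Implicit Defensive.

Record quandle := Quandle {
  qcar :> Type;
  qop  : qcar -> qcar -> qcar;
  qinv : qcar -> qcar -> qcar;
  qop_idem  : forall x, qop x x = x;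
  qinv_idem : forall x, qinv x x = x;
  qop_invK  : forall x y, qinv (qop x y) y = x;
  qinv_opK  : forall x y, qop (qinv x y) y = x;
  qop_dist  : forall x y z, qop (qop x y) z = qop (qop x z) (qop y z);
  qinv_dist : forall x y z, qinv (qinv x y) z = qinv (qinv x z) (qinv y z)
}.

Arguments qop {q}.
Arguments qinv {q}.

Definition qhom (X Y : quandle) (f : X -> Y) : Prop :=
  (forall x y, f (qop x y) = qop (f x) (f y)) /\
  (forall x y, f (qinv x y) = qinv (f x) (f y)).

Definition subquandle (X : quandle) (M : X -> Prop) : Prop :=
  forall x y, M x -> M y -> M (qop x y) /\ M (qinv x y).

Inductive orbit (X : quandle) (x : X) : X -> Prop :=
  | orbit_refl : orbit x x
  | orbit_op   : forall y z, orbit x y -> orbit x (qop y z)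
  | orbit_inv  : forall y z, orbit x y -> orbit x (qinv y z).

(** Unit of the reflection pi_0 -| U: x |-> [x]_X (orbits represented as subsets of X). *)
Definition eta (X : quandle) (x : X) : X -> Prop := orbit x.

(** Pullback closure: c_X(M) = eta_X^{-1}( image of U pi_0(m) ).  The map
    U pi_0(m) : U pi_0(M) -> U pi_0(X) sends [m]_M to [m]_X, so its image is
    { [m]_X | m in M }. *)
Definition closure (X : quandle) (M : X -> Prop) : X -> Prop :=
  fun x => exists m, M m /\ eta x = eta m.

Definition qjoin (X : quandle) (I : Type) (S : I -> X -> Prop) : X -> Prop :=
  fun x => forall N : X -> Prop, subquandle N ->
             (forall i y, S i y -> N y) -> N x.

Section Product.
Variables (n : nat) (X : 'I_n -> quandle).

Definition prod_car := forall i : 'I_n, X i.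
Definition prod_op (x y : prod_car) : prod_car := fun i => qop (x i) (y i).
Definition prod_inv (x y : prod_car) : prod_car := fun i => qinv (x i) (y i).

Lemma prod_op_idem x : prod_op x x = x.
Proof. apply: functional_extensionality_dep => i; exact: qop_idem. Qed.
Lemma prod_inv_idem x : prod_inv x x = x.
Proof. apply: functional_extensionality_dep => i; exact: qinv_idem. Qed.
Lemma prod_op_invK x y : prod_inv (prod_op x y) y = x.
Proof. apply: functional_extensionality_dep => i; exact: qop_invK. Qed.
Lemma prod_inv_opK x y : prod_op (prod_inv x y) y = x.
Proof. apply: functional_extensionality_dep => i; exact: qinv_opK. Qed.
Lemma prod_op_dist x y z :
  prod_op (prod_op x y) z = prod_op (prod_op x z) (prod_op y z).
Proof. apply: functional_extensionality_dep => i; exact: qop_dist. Qed.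
Lemma prod_inv_dist x y z :
  prod_inv (prod_inv x y) z = prod_inv (prod_inv x z) (prod_inv y z).
Proof. apply: functional_extensionality_dep => i; exact: qinv_dist. Qed.

Definition prodQ : quandle :=
  @Quandle prod_car prod_op prod_inv prod_op_idem prod_inv_idem
    prod_op_invK prod_inv_opK prod_op_dist prod_inv_dist.

Definition prodS (M : forall i : 'I_n, X i -> Prop) : prodQ -> Prop :=
  fun x => forall i, M i (x i).
End Product.

Definition qimage (X Y : quandle) (f : X -> Y) (M : X -> Prop) : Y -> Prop :=
  fun y => exists x, M x /\ f x = y.

From Stdlib Require Import FunctionalExtensionality.
From Stdlib Require Import PropExtensionality ClassicalEpsilon.
From mathcomp Require Import ssreflect ssrfun ssrbool eqtype ssrnat fintype.

Set Implicit Arguments.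
Unset Strict Implicit.
Unset Printing Implicit Defensive.

(* Orbits are the classes of an equivalence relation (x ◁ y can be undone by
   ◁^{-1} y), so c_X(M) is the union of the orbits meeting M.  Everything then
   reduces to how orbits behave: a join of subquandles lies in the union of the
   orbits of its generators; orbits in a product are products of orbits, since
   one may move one coordinate at a time by acting with a tuple equal to the
   moving point elsewhere (using idempotency); and a surjective homomorphism
   maps orbits onto orbits. *)

Section Orbits.
Variable X : quandle.
Implicit Types (M : X -> Prop) (x y m : X).

Lemma orbit_trans x y z : orbit x y -> orbit y z -> orbit x z.
Proof.
move=> Hxy; elim=> [|u v _ IH|u v _ IH] //; [exact: orbit_op|exact: orbit_inv].
Qed.

Lemma orbit_op_inv y z : orbit (qop y z) y.
Proof. by rewrite -{2}(qop_invK y z); apply/orbit_inv/orbit_refl. Qed.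

Lemma orbit_inv_inv y z : orbit (qinv y z) y.
Proof. by rewrite -{2}(qinv_opK y z); apply/orbit_op/orbit_refl. Qed.

Lemma orbit_sym x y : orbit x y -> orbit y x.
Proof.
elim=> [|u v _ IH|u v _ IH]; first exact: orbit_refl.
- exact: orbit_trans (orbit_op_inv u v) IH.
- exact: orbit_trans (orbit_inv_inv u v) IH.
Qed.

Lemma eta_eqE x m : eta x = eta m <-> orbit m x.
Proof.
split=> [Exm | Hmx].
  by have := orbit_refl x; rewrite -[orbit x]/(eta x) Exm.
apply: functional_extensionality => z; apply: propositional_extensionality.
by split=> Hz; [exact: orbit_trans Hmx Hz|exact: orbit_trans (orbit_sym Hmx) Hz].
Qed.

Lemma closureE M y : closure M y <-> exists m, M m /\ orbit m y.
Proof. by split=> -[m [Mm Hm]]; exists m; split => //; apply/eta_eqE. Qed.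

Lemma closure_set1 x y : closure (fun z => z = x) y <-> orbit x y.
Proof. by rewrite closureE; split=> [[m [-> //]] | Hxy]; exists x. Qed.

Lemma closure_subquandle M : subquandle (closure M).
Proof.
move=> x y /closureE [m [Mm Hmx]] _.
by split; apply/closureE; exists m; split=> //; [exact: orbit_op|exact: orbit_inv].
Qed.

Lemma closure_mono M N y : (forall z, M z -> N z) -> closure M y -> closure N y.
Proof. by move=> MN /closureE [m [/MN Nm Hmy]]; apply/closureE; exists m. Qed.
End Orbits.

Section Join.
Variables (X : quandle) (I : Type) (S : I -> X -> Prop).

Lemma sub_qjoin i x : S i x -> qjoin S x.
Proof. by move=> Sx N _ SN; exact: SN Sx. Qed.

Lemma qjoin_sub_orbits x : qjoin S x -> exists i m, S i m /\ orbit m x.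
Proof.
move/(_ (fun z => exists i m, S i m /\ orbit m z)); apply.
  move=> a b [i [m [Sm Hma]]] _.
  by split; exists i, m; split=> //; [exact: orbit_op|exact: orbit_inv].
by move=> i y Sy; exists i, y; split=> //; exact: orbit_refl.
Qed.

Lemma closure_qjoin y : closure (qjoin S) y <-> qjoin (fun i => closure (S i)) y.
Proof.
split.
  move=> /closureE [x [/qjoin_sub_orbits [i [m [Sm Hmx]]] Hxy]] N _ cSN.
  by apply: (cSN i); apply/closureE; exists m; split=> //; exact: orbit_trans Hxy.
apply; first exact: closure_subquandle.
by move=> i z; apply: closure_mono => w; exact: sub_qjoin.
Qed.
End Join.

Lemma dependent_choice (I : Type) (T : I -> Type) (P : forall i, T i -> Prop) :
  (forall i, exists x, P i x) -> exists f : forall i, T i, forall i, P i (f i).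
Proof.
move=> H; exists (fun i => proj1_sig (constructive_indefinite_description _ (H i))).
by move=> i; exact: proj2_sig.
Qed.

Section Product.
Variables (n : nat) (X : 'I_n -> quandle).
Implicit Types (p q : prodQ X).

Definition upd p (i : 'I_n) (c : X i) : prodQ X :=
  fun j => match i =P j with ReflectT e => eq_rect i X c j e | ReflectF _ => p j end.

Lemma upd_same p i (c : X i) : upd p c i = c.
Proof. by rewrite /upd; case: eqP => // e; rewrite (eq_irrelevance e erefl). Qed.

Lemma upd_other p i (c : X i) j : i != j -> upd p c j = p j.
Proof. by rewrite /upd; case: eqP => // ->; rewrite eqxx. Qed.

Lemma upd_id p i : upd p (p i) = p.
Proof.
apply: functional_extensionality_dep => j.
by case: (eqVneq i j) => [<-|ne]; rewrite ?upd_same ?upd_other.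
Qed.

(* Off coordinate [i] both tuples equal [p j], and [p j ◁ p j = p j]. *)
Lemma upd_op p i (a b : X i) : upd p (qop a b) = qop (upd p a) (upd p b).
Proof.
apply: functional_extensionality_dep => j; rewrite /= /prod_op.
by case: (eqVneq i j) => [<-|ne]; rewrite ?upd_same // !upd_other // qop_idem.
Qed.

Lemma upd_inv p i (a b : X i) : upd p (qinv a b) = qinv (upd p a) (upd p b).
Proof.
apply: functional_extensionality_dep => j; rewrite /= /prod_inv.
by case: (eqVneq i j) => [<-|ne]; rewrite ?upd_same // !upd_other // qinv_idem.
Qed.

Lemma orbit_upd p i (b : X i) : orbit (p i) b -> orbit p (upd p b).
Proof.
elim=> [|y z _ IH|y z _ IH]; first by rewrite upd_id; exact: orbit_refl.
- by rewrite upd_op; exact: orbit_op.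
- by rewrite upd_inv; exact: orbit_inv.
Qed.

Lemma orbit_proj p q i : orbit p q -> orbit (p i) (q i).
Proof.
elim=> [|y z _ IH|y z _ IH]; [exact: orbit_refl|exact: orbit_op|exact: orbit_inv].
Qed.

Lemma orbit_prod p q : (forall i, orbit (p i) (q i)) -> orbit p q.
Proof.
move=> Hpq; pose mix k : prodQ X := fun j => if (j < k)%N then q j else p j.
have mix_n : mix n = q.
  by apply: functional_extensionality_dep => j; rewrite /mix ltn_ord.
suff orbit_mix k : orbit p (mix k) by rewrite -mix_n.
elim: k => [|k IH].
  have -> : mix 0 = p by apply: functional_extensionality_dep.
  exact: orbit_refl.
have [ltkn | lenk] := ltnP k n; last first.
  have -> // : mix k.+1 = mix k.
  apply: functional_extensionality_dep => j; rewrite /mix.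
  by have ltjk := leq_trans (ltn_ord j) lenk; rewrite ltjk ltnS ltnW.
pose i := Ordinal ltkn.
have -> : mix k.+1 = upd (mix k) (q i).
  apply: functional_extensionality_dep => j.
  case: (eqVneq i j) => [<-|ne]; first by rewrite upd_same /mix ltnSn.
  rewrite upd_other // /mix ltnS leq_eqVlt.
  by have /negbTE -> : nat_of_ord j != k by apply: contra ne => /eqP jk; apply/eqP/val_inj.
apply: orbit_trans IH (orbit_upd _).
by rewrite /mix /= ltnn; exact: Hpq.
Qed.

Lemma closure_prodS (M : forall i, X i -> Prop) q :
  closure (prodS M) q <-> prodS (fun i => closure (M i)) q.
Proof.
split.
  move=> /closureE [p [Mp Hpq]] i.
  by apply/closureE; exists (p i); split=> //; exact: orbit_proj.
move=> cMq; have /dependent_choice [p Hp] : forall i, exists m, M i m /\ orbit m (q i).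
  by move=> i; apply/closureE.
apply/closureE; exists p; split; first by move=> i; case: (Hp i).
by apply: orbit_prod => i; case: (Hp i).
Qed.
End Product.

Section Image.
Variables (X Y : quandle) (f : X -> Y).
Hypothesis f_hom : qhom f.

Lemma orbit_hom x x' : orbit x x' -> orbit (f x) (f x').
Proof.
case: f_hom => fop finv.
elim=> [|y z _ IH|y z _ IH]; first exact: orbit_refl.
- by rewrite fop; exact: orbit_op.
- by rewrite finv; exact: orbit_inv.
Qed.

Hypothesis f_surj : forall y : Y, exists x : X, f x = y.

Lemma orbit_lift x y : orbit (f x) y -> exists x', orbit x x' /\ f x' = y.
Proof.
case: f_hom => fop finv.
elim=> [|u z _ [x' [Hxx' <-]]|u z _ [x' [Hxx' <-]]].
- by exists x; split=> //; exact: orbit_refl.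
- by have [w <-] := f_surj z; exists (qop x' w); rewrite fop; split=> //; exact: orbit_op.
- by have [w <-] := f_surj z; exists (qinv x' w); rewrite finv; split=> //; exact: orbit_inv.
Qed.

Lemma qimage_closure (M : X -> Prop) y :
  qimage f (closure M) y <-> closure (qimage f M) y.
Proof.
split.
  move=> [x [/closureE [m [Mm Hmx]] <-]].
  by apply/closureE; exists (f m); split; [exists m|exact: orbit_hom].
move=> /closureE [_ [[m [Mm <-]] /orbit_lift [x [Hmx <-]]]].
by exists x; split=> //; apply/closureE; exists m.
Qed.
End Image.

Theorem mainTheorem3 :
  (forall (X : quandle) (x : X),
     forall y : X, closure (fun z => z = x) y <-> orbit x y)
  /\
  (forall (X : quandle) (I : Type) (S : I -> X -> Prop),
     (forall i, subquandle (S i)) ->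
     forall y : X, closure (qjoin S) y <-> qjoin (fun i => closure (S i)) y)
  /\
  (forall (n : nat) (X : 'I_n -> quandle) (M : forall i : 'I_n, X i -> Prop),
     (forall i, subquandle (M i)) ->
     forall y : prodQ X,
       closure (prodS M) y <-> prodS (fun i => closure (M i)) y)
  /\
  (forall (X Y : quandle) (f : X -> Y),
     qhom f -> (forall y : Y, exists x : X, f x = y) ->
     forall M : X -> Prop, subquandle M ->
     forall y : Y, qimage f (closure M) y <-> closure (qimage f M) y).
Proof.
split; first exact: closure_set1.
split; first by move=> X I S _; exact: closure_qjoin.
split; first by move=> n X M _; exact: closure_prodS.
by move=> X Y f fhom fsurj M _; exact: qimage_closure.
Qed.
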